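(* Let $x=(x_1,x_2,x_3,x_4)\in(0,1)^4$ and $y=(y_1,y_2,y_3,y_4)\in(0,1)^4$, and write $\bar z:=1-z$. Let $$\mathbf M=\begin{pmatrix} x_1y_1 & x_2y_3 & x_3y_2 & x_4y_4\\ x_1\bar y_1 & x_2\bar y_3 & x_3\bar y_2 & x_4\bar y_4\\ \bar x_1 y_1 & \bar x_2 y_3 & \bar x_3 y_2 & \bar x_4 y_4\\ \bar x_1\bar y_1 & \bar x_2\bar y_3 & \bar x_3\bar y_2 & \bar x_4\bar y_4\end{pmatrix},$$ and let $\mathbf p_{\mathrm e}=(p_{\mathrm{CCe}},p_{\mathrm{CDe}},p_{\mathrm{DCe}},p_{\mathrm{DDe}})^{\mathrm T}$ be the unique probability vector with $\mathbf M\mathbf p_{\mathrm e}=\mathbf p_{\mathrm e}$, regarded as a function of $x_1$ (all other variables fixed). Put $\mathbf p_{\mathrm{CC(C)}}=(y_1,\bar y_1,0,0)^{\mathrm T}$ and $\mathbf p_{\mathrm{CC(D)}}=(0,0,y_1,\bar y_1)^{\mathrm T}$. Then the series below converges and $$\frac{\partial \mathbf p_{\mathrm e}}{\partial x_1}=p_{\mathrm{CCe}}\lim_{n\to\infty}\sum_{t=0}^{n}\mathbf M^t\bigl(\mathbf p_{\mathrm{CC(C)}}-\mathbf p_{\mathrm{CC(D)}}\bigr).$$ Consequently, for any payoff vector $\mathbf u=(R,S,T,P)^{\mathrm T}$, the learning dynamics $\dot x_1=x_1\bar x_1\,p_{\mathrm{CCe}}\sum_{t=0}^{\infty}\mathbf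 M^t(\mathbf p_{\mathrm{CC(C)}}-\mathbf p_{\mathrm{CC(D)}})\cdot\mathbf u$ coincide with $\dot x_1=x_1\bar x_1\,\frac{\partial\mathbf p_{\mathrm e}}{\partial x_1}\cdot\mathbf u$.
   Context: Setting: iterated two-player prisoner's dilemma with memory-one strategies. The states of one round are ordered CC, CD, DC, DD (own action first, opponent's second, from player $x$'s viewpoint). $x_i$ (resp. $y_i$) is the probability that player $x$ (resp. the opponent $y$) cooperates when the previous round's outcome, from its own viewpoint, was the $i$-th state. $\mathbf M$ is the Markov transition matrix of the outcome distribution (column-stochastic, $\mathbf p'=\mathbf M\mathbf p$), and $\mathbf p_{\mathrm e}$ its stationary distribution. *)

From HB Require Import structures.
From mathcomp Require Import all_boot all_order all_algebra.
From mathcomp Require Import all_classical all_reals all_analysis.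
Set Implicit Arguments. Unset Strict Implicit. Unset Printing Implicit Defensive.
Import Order.TTheory GRing.Theory Num.Theory.
Local Open Scope ring_scope.

(* States ordered CC, CD, DC, DD (indices 0,1,2,3). Column j = previous state,
   row i = next state; M is column-stochastic, p' = M p. *)
Definition transM {R : pzRingType} (x1 x2 x3 x4 y1 y2 y3 y4 : R) : 'M[R]_4 :=
  let rows := [:: [:: x1 * y1; x2 * y3; x3 * y2; x4 * y4];
                  [:: x1 * (1 - y1); x2 * (1 - y3); x3 * (1 - y2); x4 * (1 - y4)];
                  [:: (1 - x1) * y1; (1 - x2) * y3; (1 - x3) * y2; (1 - x4) * y4];
                  [:: (1 - x1) * (1 - y1); (1 - x2) * (1 - y3);
                      (1 - x3) * (1 - y2); (1 - x4) * (1 - y4)]] in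
  \matrix_(i < 4, j < 4) nth 0 (nth [::] rows i) j.

Definition prob_vec {R : numDomainType} (p : 'cV[R]_4) : Prop :=
  (forall i, 0 <= p i 0) /\ \sum_(i < 4) p i 0 = 1.

Definition stationary {R : numDomainType} (M : 'M[R]_4) (p : 'cV[R]_4) : Prop :=
  prob_vec p /\ M *m p = p.

Definition cv4 {R : pzRingType} (a b c d : R) : 'cV[R]_4 :=
  \col_(i < 4) nth 0 [:: a; b; c; d] i.

Definition in01 {R : numDomainType} (z : R) : Prop := 0 < z < 1.

From HB Require Import structures.
From mathcomp Require Import all_boot all_order all_algebra.
From mathcomp Require Import all_classical all_reals all_analysis.
From mathcomp Require Import ring lra.
Import Order.TTheory GRing.Theory Num.Theory.
Local Open Scope ring_scope.

(* Only the first column of the transition matrix depends on x1, so with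
   M := M(x1) one has M(t) = M + (t - x1) dv e_0^T, and the stationary vectors
   satisfy M p(t) = p(t) - (t - x1) p_CC(t) dv.  Being positive and column
   stochastic, M contracts the l1-norm of zero-sum vectors by a factor c < 1:
   a zero-sum fixed point of M vanishes, and M^k v -> 0 for zero-sum v.
   Comparing p(t0) with p(x1) for one t0 <> x1 yields a zero-sum w with
   (I - M) w = dv, and uniqueness then gives p(t) = p(x1) + (t - x1) p_CC(t) w
   for every t.  Hence the partial sums of the series telescope to
   w - M^(n+1) w -> w, and Caratheodory's criterion shows that p is
   differentiable at x1 with derivative p_CC(x1) w. *)

Definition entry_sum {R : nmodType} {n} (v : 'cV[R]_n) : R := \sum_i v i 0.
Definition l1norm {R : numDomainType} {n} (v : 'cV[R]_n) : R := \sum_i `|v i 0|.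

Lemma entry_sumB {R : zmodType} {n} (u v : 'cV[R]_n) :
  entry_sum (u - v) = entry_sum u - entry_sum v.
Proof. by rewrite /entry_sum -sumrB; apply: eq_bigr => i _; rewrite !mxE. Qed.

Lemma entry_sumZ {R : pzRingType} {n} (a : R) (v : 'cV[R]_n) :
  entry_sum (a *: v) = a * entry_sum v.
Proof. by rewrite /entry_sum mulr_sumr; apply: eq_bigr => i _; rewrite !mxE. Qed.

Lemma norm_entry_le_l1norm {R : numDomainType} {n} (v : 'cV[R]_n) i :
  `|v i 0| <= l1norm v.
Proof. by rewrite /l1norm (bigD1 i) //= lerDl sumr_ge0. Qed.

Lemma norm_entry_le1 {R : numDomainType} {n} (p : 'cV[R]_n) i :
  (forall j, 0 <= p j 0) -> entry_sum p = 1 -> `|p i 0| <= 1.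
Proof.
move=> p_ge0 p1; rewrite ger0_norm // -p1 /entry_sum (bigD1 i) //= lerDl.
exact: sumr_ge0.
Qed.

Lemma matrix_gt0_lbound {R : realDomainType} {m n} {A : 'M[R]_(m.+1, n.+1)} :
  (forall i j, 0 < A i j) -> exists2 d, 0 < d & forall i j, d <= A i j.
Proof.
move=> A_gt0.
have [[i0 j0] _ min_ij] := @arg_minP _ R _ (ord0, ord0) predT
  (fun k : 'I_m.+1 * 'I_n.+1 => A k.1 k.2) isT.
by exists (A i0 j0) => // i j; apply: (min_ij (i, j)).
Qed.

Section ColumnStochastic.
Context {R : realFieldType} {n : nat} {M : 'M[R]_n.+1}.
Hypothesis M_colsum : forall j, \sum_i M i j = 1.
Hypothesis M_gt0 : forall i j, 0 < M i j.

Lemma entry_sum_mulmx v : entry_sum (M *m v) = entry_sum v.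
Proof.
rewrite /entry_sum; under eq_bigr do rewrite mxE.
rewrite exchange_big; apply: eq_bigr => j _.
by rewrite -mulr_suml M_colsum mul1r.
Qed.

(* For [v] of sum 0, [M *m v] is unchanged when [d] is subtracted from every entry
   of [M], and then each column has l1-norm [1 - n.+1 * d]. *)
Lemma l1norm_mulmx_sum0_le d v : (forall i j, d <= M i j) -> entry_sum v = 0 ->
  l1norm (M *m v) <= (1 - n.+1%:R * d) * l1norm v.
Proof.
move=> d_le v0.
have Mv i : (M *m v) i 0 = \sum_j (M i j - d) * v j 0.
  under [RHS]eq_bigr do rewrite mulrBl.
  by rewrite sumrB -mulr_sumr -/(entry_sum v) v0 mulr0 subr0 mxE.
apply: (@le_trans _ _ (\sum_i \sum_j (M i j - d) * `|v j 0|)).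
  apply: ler_sum => i _; rewrite Mv; apply: le_trans (ler_norm_sum _ _ _) _.
  by apply: ler_sum => j _; rewrite normrM ger0_norm // subr_ge0.
rewrite exchange_big mulr_sumr; apply: ler_sum => j _.
by rewrite -mulr_suml sumrB M_colsum sumr_const card_ord mulr_natl.
Qed.

Lemma entry_sum_pow_mulmx k v : entry_sum (M ^+ k *m v) = entry_sum v.
Proof.
elim: k => [|k IHk]; first by rewrite expr0 mul1mx.
by rewrite exprS -mulmxE -mulmxA entry_sum_mulmx.
Qed.

Lemma sum0_contraction : exists2 c : R, 0 <= c < 1 &
  forall v, entry_sum v = 0 -> l1norm (M *m v) <= c * l1norm v.
Proof.
have [d d_gt0 d_le] := matrix_gt0_lbound M_gt0.
exists (1 - n.+1%:R * d); last by move=> v; apply: l1norm_mulmx_sum0_le.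
have : \sum_(i < n.+1) d <= \sum_i M i 0 by apply: ler_sum => i _.
rewrite sumr_const card_ord M_colsum => nd_le1.
by rewrite subr_ge0 mulr_natl nd_le1 ltrBlDr ltrDl -mulr_natl mulr_gt0.
Qed.

Lemma sum0_pow_contraction : exists2 c : R, 0 <= c < 1 &
  forall v k, entry_sum v = 0 -> l1norm (M ^+ k *m v) <= c ^+ k * l1norm v.
Proof.
have [c /andP[c_ge0 c_lt1] Mc] := sum0_contraction.
exists c; first by rewrite c_ge0.
move=> v k v0; elim: k => [|k IHk]; first by rewrite expr0 mul1mx mul1r.
have Mkv0 : entry_sum (M ^+ k *m v) = 0 by rewrite entry_sum_pow_mulmx.
rewrite exprS -mulmxE -mulmxA; apply: le_trans (Mc _ Mkv0) _.
by rewrite exprS -mulrA ler_wpM2l.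
Qed.

Lemma sum0_fixed_eq0 v : M *m v = v -> entry_sum v = 0 -> v = 0.
Proof.
move=> Mv v0; have [c /andP[_ c_lt1] Mc] := sum0_contraction.
have v_le : l1norm v <= c * l1norm v by rewrite -{1}Mv Mc.
have v_le0 : l1norm v <= 0 by nra.
apply/matrixP => i j; rewrite (ord1 j) mxE; apply/normr0_eq0/le_anti.
by rewrite normr_ge0 andbT (le_trans (norm_entry_le_l1norm v i)).
Qed.

Lemma stationary_entry_gt0 (p : 'cV[R]_n.+1) i :
  (forall j, 0 <= p j 0) -> entry_sum p = 1 -> M *m p = p -> 0 < p i 0.
Proof.
move=> p_ge0 p1 Mp; have [d d_gt0 d_le] := matrix_gt0_lbound M_gt0.
rewrite -Mp mxE; apply: lt_le_trans d_gt0 _.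
rewrite -[d]mulr1 -p1 /entry_sum mulr_sumr.
by apply: ler_sum => j _; rewrite ler_wpM2r.
Qed.

End ColumnStochastic.

Lemma sum_pow_mulmx_telescope {R : pzRingType} {n} {M : 'M[R]_n}
    {b w : 'cV[R]_n} :
  M *m w = w - b -> forall k, \sum_(t < k) M ^+ t *m b = w - M ^+ k *m w.
Proof.
move=> Mw; elim=> [|k IHk]; first by rewrite big_ord0 expr0 mul1mx subrr.
rewrite big_ord_recr /= IHk.
have -> : b = w - M *m w by rewrite Mw opprB addrC subrK.
rewrite mulmxBr exprSr -mulmxE mulmxA.
by rewrite addrA subrK.
Qed.

Section ColumnStochasticLimits.
Import numFieldNormedType.Exports.
Context {R : archiRealFieldType} {n : nat} {M : 'M[R]_n.+1}.
Hypothesis M_colsum : forall j, \sum_i M i j = 1.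
Hypothesis M_gt0 : forall i j, 0 < M i j.

Lemma cvg_pow_mulmx_sum0 {v : 'cV[R]_n.+1} i : entry_sum v = 0 ->
  ((M ^+ k *m v) i 0 @[k --> \oo] --> 0)%classic.
Proof.
move=> v0.
have [c /andP[c_ge0 c_lt1] Mc] := sum0_pow_contraction M_colsum M_gt0.
apply/norm_cvg0P.
apply: (@squeeze_cvgr _ _ _ _ (cst 0) (fun k => c ^+ k * l1norm v)).
- near=> k; rewrite normr_ge0 /=.
  exact: le_trans (norm_entry_le_l1norm _ i) (Mc v k v0).
- exact: cvg_cst.
- rewrite -(mul0r (l1norm v)); apply: cvgM (cvg_cst _).
  by apply: cvg_expr; rewrite ger0_norm.
Unshelve. all: by end_near.
Qed.

Lemma cvg_sum_pow_mulmx {b w : 'cV[R]_n.+1} i :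
  M *m w = w - b -> entry_sum w = 0 ->
  ((\sum_(t < k.+1) M ^+ t *m b) i 0 @[k --> \oo] --> w i 0)%classic.
Proof.
move=> Mw w0.
have lim_w : ((w i 0 - (M ^+ k.+1 *m w) i 0) @[k --> \oo] --> w i 0)%classic.
  rewrite -[X in (_ --> X)%classic]subr0; apply: cvgB; first exact: cvg_cst.
  by rewrite (cvg_shiftS (fun k => (M ^+ k *m w) i 0)); exact: cvg_pow_mulmx_sum0.
apply: cvg_trans _ lim_w; apply: near_eq_cvg; near=> k.
by rewrite /= (sum_pow_mulmx_telescope Mw) !mxE.
Unshelve. all: by end_near.
Qed.

End ColumnStochasticLimits.

Section StationaryPerturbation.
Context {R : realFieldType} {n : nat} {M : 'M[R]_n.+1} {b : 'cV[R]_n.+1}.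
Hypothesis M_colsum : forall j, \sum_i M i j = 1.
Hypothesis M_gt0 : forall i j, 0 < M i j.
Context {D : R -> Prop} {x : R} {p : R -> 'cV[R]_n.+1}.
Hypothesis D_x : D x.
Hypothesis p_sum1 : forall t, D t -> entry_sum (p t) = 1.
(* [p t] is fixed by the rank-one perturbation [M + (t - x) b e_0^T] of [M]. *)
Hypothesis p_fixed : forall t, D t -> M *m p t = p t - ((t - x) * p t 0 0) *: b.

Let Mpx : M *m p x = p x.
Proof. by rewrite p_fixed // subrr mul0r scale0r subr0. Qed.

Lemma perturbation_solution t0 : D t0 -> t0 != x -> p t0 0 0 != 0 ->
  exists2 w, M *m w = w - b & entry_sum w = 0.
Proof.
move=> D_t0 t0_neq_x pt0_neq0; set k := (t0 - x) * p t0 0 0.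
have k_neq0 : k != 0 by rewrite mulf_neq0 ?subr_eq0.
exists (k^-1 *: (p t0 - p x)).
  rewrite -scalemxAr mulmxBr p_fixed // Mpx -/k addrAC scalerBr scalerA.
  by rewrite mulVf // scale1r.
by rewrite entry_sumZ entry_sumB !p_sum1 // subrr mulr0.
Qed.

Lemma stationary_affine w : M *m w = w - b -> entry_sum w = 0 ->
  forall t, D t -> p t = p x + ((t - x) * p t 0 0) *: w.
Proof.
move=> Mw w0 t D_t; apply/eqP; rewrite -subr_eq0 opprD addrA; apply/eqP.
apply: (sum0_fixed_eq0 M_colsum M_gt0).
  rewrite !mulmxBr -scalemxAr p_fixed // Mpx Mw.
  by apply/matrixP => i j; rewrite !mxE; ring.
by rewrite !entry_sumB entry_sumZ w0 !p_sum1 // mulr0 subr0 subrr.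
Qed.

End StationaryPerturbation.

Section Caratheodory.
Import numFieldNormedType.Exports.
Context {R : realFieldType}.
Implicit Types f g : R -> R.

Lemma continuous_slope_bounded {f g} {x K : R} :
  (\forall t \near x, f t = f x + (t - x) * g t) ->
  (\forall t \near x, `|g t| <= K) -> {for x, continuous f}.
Proof.
move=> f_slope g_le; apply/cvgrPdist_le => e e_gt0.
have K1_gt0 : 0 < `|K| + 1 by rewrite ltr_pwDr.
near=> t.
have -> : f x - f t = (x - t) * g t.
  by rewrite (near f_slope t) // opprD addrA subrr add0r -mulNr opprB.
rewrite normrM -[leRHS](@divfK _ (`|K| + 1)) ?gt_eqF //.
apply: ler_pM => //.
  by near: t; apply: cvgr_dist_le; [exact: cvg_id | rewrite divr_gt0].
apply: le_trans (near g_le t _) _ => //; rewrite ler_wpDr ?ler_norm //.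
Unshelve. all: by end_near.
Qed.

Lemma is_derive_slope_continuous {f g} {x : R} :
  (\forall t \near x, f t = f x + (t - x) * g t) -> {for x, continuous g} ->
  is_derive x 1 f (g x).
Proof.
move=> f_slope g_cont.
have slope0 : \forall h \near 0, f (h + x) = f x + h * g (h + x).
  by move/nbhs0P: f_slope; apply: filterS => h; rewrite [x + h]addrC addrK.
have quot_cvg :
    ((fun h => h^-1 *: ((f \o shift x) (h *: 1) - f x)) @ 0^' --> g x)%classic.
  apply: cvg_trans (_ : ((g \o shift x) @ 0^' --> g x)%classic).
    apply: near_eq_cvg; near=> h.
    have h_neq0 : h != 0 by near: h; exact: nbhs_dnbhs_neq.
    rewrite /= -[h%:A]/(h * 1) mulr1 (near (nbhs_dnbhs slope0) h) //.
    by rewrite addrAC subrr add0r -[_ *: _]/(_ * _) mulKf.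
  by apply: cvg_within_filter; rewrite cvg_comp_shift add0r.
by apply: DeriveDef; [exact: cvgP quot_cvg | exact: cvg_lim quot_cvg].
Unshelve. all: by end_near.
Qed.

Lemma is_derive_affine_family n (p : R -> 'cV[R]_n.+1) (w : 'cV[R]_n.+1) x K i :
  (\forall t \near x, p t = p x + ((t - x) * p t 0 0) *: w) ->
  (\forall t \near x, `|p t 0 0| <= K) ->
  is_derive x 1 (fun t => p t i 0) (p x 0 0 * w i 0).
Proof.
move=> p_affine p0_le.
have p_slope j :
    \forall t \near x, p t j 0 = p x j 0 + (t - x) * (p t 0 0 * w j 0).
  by move: p_affine; apply: filterS => t pt; rewrite {1}pt !mxE mulrA.
have p0_cont : {for x, continuous (fun t => p t 0 0)}.
  apply: (continuous_slope_bounded (p_slope 0) (K := K * `|w 0 0|)).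
  by move: p0_le; apply: filterS => t pt_le; rewrite normrM ler_wpM2r.
apply: (is_derive_slope_continuous (p_slope i)).
exact: cvgM p0_cont (cvg_cst _).
Qed.

End Caratheodory.

Section OpenUnitInterval.
Import numFieldNormedType.Exports.
Context {R : realFieldType}.

Lemma near_in01 {x : R} : in01 x -> \forall t \near x, in01 t.
Proof.
move=> x01; have : x \in `]0, 1[ by rewrite in_itv.
by move/near_in_itvoo; apply: filterS => t; rewrite in_itv.
Qed.

End OpenUnitInterval.

Lemma big_ord4 (V : nmodType) (F : 'I_4 -> V) :
  \sum_(i < 4) F i = F 0 + F 1 + F 2%R + F 3%R.
Proof.
rewrite !big_ord_recr big_ord0 /= add0r.
by congr (_ + _ + _ + _); congr F; apply/val_inj.
Qed.

Lemma forall_ord4 (P : 'I_4 -> Prop) :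
  P 0 -> P 1 -> P 2%R -> P 3%R -> forall i, P i.
Proof.
move=> P0 P1 P2 P3 [[|[|[|[|i]]]] i_lt4] //.
- by rewrite (_ : Ordinal _ = 0) //; apply/val_inj.
- by rewrite (_ : Ordinal _ = 1) //; apply/val_inj.
- by rewrite (_ : Ordinal _ = 2%R) //; apply/val_inj.
- by rewrite (_ : Ordinal _ = 3%R) //; apply/val_inj.
Qed.

Lemma transM_gt0 {R : numDomainType} (a1 a2 a3 a4 b1 b2 b3 b4 : R) :
  in01 a1 -> in01 a2 -> in01 a3 -> in01 a4 ->
  in01 b1 -> in01 b2 -> in01 b3 -> in01 b4 ->
  forall i j, 0 < transM a1 a2 a3 a4 b1 b2 b3 b4 i j.
Proof.
have in01P (z : R) : in01 z -> 0 < z /\ 0 < 1 - z by case/andP; rewrite subr_gt0.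
move=> /in01P[? ?] /in01P[? ?] /in01P[? ?] /in01P[? ?].
move=> /in01P[? ?] /in01P[? ?] /in01P[? ?] /in01P[? ?].
by apply: forall_ord4; apply: forall_ord4; rewrite mxE /=; apply: mulr_gt0.
Qed.

Lemma transM_colsum {R : comPzRingType} (a1 a2 a3 a4 b1 b2 b3 b4 : R) j :
  \sum_i transM a1 a2 a3 a4 b1 b2 b3 b4 i j = 1.
Proof. by rewrite big_ord4 !mxE; move: j; apply: forall_ord4 => /=; ring. Qed.

Lemma transM_mulmx_shift {R : comPzRingType} (t s a2 a3 a4 b1 b2 b3 b4 : R)
    (v : 'cV[R]_4) :
  transM t a2 a3 a4 b1 b2 b3 b4 *m v = transM s a2 a3 a4 b1 b2 b3 b4 *m v +
    ((t - s) * v 0 0) *: (cv4 b1 (1 - b1) 0 0 - cv4 0 0 b1 (1 - b1)).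
Proof.
apply/matrixP => i j; rewrite (ord1 j) !mxE !big_ord4 !mxE /=.
by move: i; apply: forall_ord4; rewrite /=; ring.
Qed.

Theorem mainTheorem1 (R : realType) (x1 x2 x3 x4 y1 y2 y3 y4 : R)
  (pe : R -> 'cV[R]_4) :
  in01 x1 -> in01 x2 -> in01 x3 -> in01 x4 ->
  in01 y1 -> in01 y2 -> in01 y3 -> in01 y4 ->
  (* pe t is the (unique) stationary distribution of M as a function of x1 = t *)
  (forall t : R, in01 t ->
     stationary (transM t x2 x3 x4 y1 y2 y3 y4) (pe t)) ->
  let M := transM x1 x2 x3 x4 y1 y2 y3 y4 in
  let dv := cv4 y1 (1 - y1) 0 0 - cv4 0 0 y1 (1 - y1) in
  let S := fun (i : 'I_4) (n : nat) =>
             (\sum_(t < n.+1) (M ^+ t *m dv)) i 0 in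
  (forall i : 'I_4,
     cvgn (S i) /\
     derivable (fun t => pe t i 0) x1 1 /\
     derive1 (fun t => pe t i 0) x1 = pe x1 0 0 * limn (S i)) /\
  (forall u : 'cV[R]_4,
     x1 * (1 - x1) * (pe x1 0 0 * \sum_(i < 4) limn (S i) * u i 0)
     = x1 * (1 - x1) * \sum_(i < 4) derive1 (fun t => pe t i 0) x1 * u i 0).
Proof.
move=> x1_01 x2_01 x3_01 x4_01 y1_01 y2_01 y3_01 y4_01 pe_stat M dv S.
have M_gt0 t : in01 t -> forall i j, 0 < transM t x2 x3 x4 y1 y2 y3 y4 i j.
  by move=> t01; apply: transM_gt0.
have M_colsum := transM_colsum x1 x2 x3 x4 y1 y2 y3 y4.
have pe_sum1 t : in01 t -> entry_sum (pe t) = 1 by case/pe_stat => -[].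
have pe_fixed t : in01 t -> M *m pe t = pe t - ((t - x1) * pe t 0 0) *: dv.
  by case/pe_stat=> _ Mpe; rewrite -{2}Mpe (transM_mulmx_shift t x1) addrK.
have [w Mw w0] : exists2 w, M *m w = w - dv & entry_sum w = 0.
  have [x1_gt0 x1_lt1] := andP x1_01.
  have x1_half : in01 (x1 / 2) by apply/andP; split; lra.
  apply: (perturbation_solution x1_01 pe_sum1 pe_fixed _ x1_half).
    by apply/eqP; lra.
  have [[pe_ge0 _] Mpe] := pe_stat _ x1_half.
  by rewrite gt_eqF // (stationary_entry_gt0 (M_gt0 _ x1_half)) ?pe_sum1.
have pe_affine :=
  stationary_affine M_colsum (M_gt0 _ x1_01) x1_01 pe_sum1 pe_fixed _ Mw w0.
have S_cvg i := cvg_sum_pow_mulmx M_colsum (M_gt0 _ x1_01) i Mw w0.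
have pe_derive i : is_derive x1 1 (fun t => pe t i 0) (pe x1 0 0 * w i 0).
  apply: is_derive_affine_family.
    exact: filterS pe_affine (near_in01 x1_01).
  apply: filterS (near_in01 x1_01) => t t01; have [[pe_ge0 _] _] := pe_stat t t01.
  exact: norm_entry_le1 pe_ge0 (pe_sum1 t t01).
have limS i : limn (S i) = w i 0 by apply: cvg_lim (S_cvg i).
split=> [i | u].
  split; first exact: cvgP (S_cvg i).
  by rewrite derive1E derive_val limS; split; first exact: ex_derive.
congr (_ * _); rewrite mulr_sumr; apply: eq_bigr => i _.
by rewrite derive1E derive_val limS mulrA.
Qed.
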